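(* For every finite set $\Omega$ with $|\Omega|\ge2$ and every $\varepsilon>0$ there exist $\delta>0$ and $n_0>0$ such that for all $n>n_0$ and all $\mu,\nu\in\mathcal P(\Omega^n)$: if $D_\square(\mu,\nu)<\delta$ then $\mathcal D_1(\mathcal O_\mu,\mathcal O_\nu)<\varepsilon$.
   Context: $\mathcal P(\mathcal X)$ denotes the set of probability measures on a finite set $\mathcal X$, identified with the standard simplex with the total variation norm $\|p-q\|_{TV}=\frac12\sum_x|p(x)-q(x)|$; $\mathcal P^2(\mathcal X)$ is the set of probability measures on $\mathcal P(\mathcal X)$, and $\mathcal D_1$ denotes the Wasserstein $\ell_1$-distance on $\mathcal P^2(\mathcal X)$ (with respect to the total variation distance on $\mathcal P(\mathcal X)$). The overlap of $\sigma,\tau\in\Omega^n$ is the distribution $\rho_{\sigma,\tau}\in\mathcal P(\Omega\times\Omega)$, $\rho_{\sigma,\tau}(\omega,\omega')=\frac1n\sum_{i=1}^n\mathbf 1\{\sigma_i=\omega,\tau_i=\omega'\}$; the overlap $\mathcal O_\mu\in\mathcal P^2(\Omega\times\Omega)$ of $\mu\in\mathcal P(\Omega^n)$ is the law of $\rho_{\sigma,\tau}$ where $\sigma,\tau$ are independent samples from $\mu$. For $\mu,\nu\in\mathcal P(\Omega^n)$ let $\Gamma(\mu,\nu)$ be the set of couplings, i.e. probability measures $\gamma$ on $\Omega^n\times\Omega^n$ whose first and second marginals are $\mu$ and $\nu$. The cut metric is $D_\square(\mu,\nu)=\frac1n\min_{\gamma\in\Gamma(\mu,\nu)}\max_{I\subset[n],\,B\subset\Omega^n\times\Omega^n,\,\omega\in\Omega}\Big|\sum_{i\in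 I}\sum_{(\sigma,\tau)\in B}\gamma(\sigma,\tau)\big(\mathbf 1\{\sigma_i=\omega\}-\mathbf 1\{\tau_i=\omega\}\big)\Big|$. *)

From HB Require Import structures.
From Stdlib Require Import Reals.
From mathcomp Require Import all_boot.

Set Implicit Arguments.
Unset Strict Implicit.
Unset Printing Implicit Defensive.

(* Decidable equality on R (from the Stdlib Reals axioms), so that elements
   of P(X) (functions X -> R on a finite X) form an eqType. *)
Definition Reqb (x y : R) : bool := if Req_EM_T x y then true else false.
Lemma Reqb_axiom : Equality.axiom Reqb.
Proof. move=> x y; rewrite /Reqb; case: Req_EM_T => h; constructor => //. Qed.
HB.instance Definition _ := hasDecEq.Build R Reqb_axiom.

Local Open Scope R_scope.

Notation "\rsum_ ( i | P ) F" := (\big[Rplus/R0]_(i | P) F)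
  (at level 41, F at level 41, i at level 50).
Notation "\rsum_ ( i : T ) F" := (\big[Rplus/R0]_(i : T) F)
  (at level 41, F at level 41, i at level 50).
Notation "\rsum_ ( i <- s | P ) F" := (\big[Rplus/R0]_(i <- s | P) F)
  (at level 41, F at level 41, i at level 50).
Notation "\rsum_ ( i <- s ) F" := (\big[Rplus/R0]_(i <- s) F)
  (at level 41, F at level 41, i at level 50).

Definition ind (b : bool) : R := if b then 1 else 0.

Definition is_prob (T : finType) (mu : T -> R) : Prop :=
  (forall x, 0 <= mu x) /\ \rsum_(x : T) mu x = 1.

Definition PX (X : finType) := {ffun X -> R}.

Definition tv (X : finType) (p q : PX X) : R :=
  / 2 * \rsum_(x : X) Rabs (p x - q x).

Section Overlap.
Variables (Omega : finType) (n : nat).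
Definition config := (n.-tuple Omega)%type.

Definition overlap (sigma tau : config) : PX (prod Omega Omega) :=
  [ffun w => INR #|[pred i : 'I_n | (tnth sigma i == w.1) && (tnth tau i == w.2)]|
             / INR n].

(* Overlap law O_mu in P^2(Omega x Omega): the law of rho_{sigma,tau} for
   sigma, tau i.i.d. from mu.  It is finitely supported, represented by its
   mass function p |-> O_mu({p}). *)
Definition overlap_law (mu : config -> R) (p : PX (prod Omega Omega)) : R :=
  \rsum_(st | overlap st.1 st.2 == p) (mu st.1 * mu st.2).

Definition is_coupling (mu nu : config -> R) (g : config * config -> R) : Prop :=
  (forall st, 0 <= g st) /\
  (forall s, \rsum_(t : config) g (s, t) = mu s) /\
  (forall t, \rsum_(s : config) g (s, t) = nu t).

(* The quantity inside the max in the definition of the cut metric, divided by n. *)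
Definition cut_val (g : config * config -> R) (I : {set 'I_n})
  (B : {set config * config}) (w : Omega) : R :=
  / INR n * Rabs (\rsum_(i | i \in I) \rsum_(st | st \in B)
       g st * (ind (tnth st.1 i == w) - ind (tnth st.2 i == w))).

(* D_box(mu,nu) < delta.  Since D_box is a min over couplings of a max over
   the finitely many (I,B,omega), this holds iff some coupling makes every
   cut value < delta. *)
Definition cut_dist_lt (mu nu : config -> R) (delta : R) : Prop :=
  exists g, is_coupling mu nu g /\
    forall I B w, cut_val g I B w < delta.
End Overlap.

(* Couplings of two finitely supported measures m1, m2 on P(X): a finitely
   supported measure on P(X) x P(X), given as a list of weighted atoms
   ((p,q), weight), with nonnegative weights and marginals m1 and m2.
   (Every coupling of two finitely supported measures is supported on the
   product of the supports, hence finitely supported.) *)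
Definition is_coupling2 (X : finType) (m1 m2 : PX X -> R)
  (g : seq ((PX X * PX X) * R)) : Prop :=
  (forall k, List.In k g -> 0 <= k.2) /\
  (forall p, \rsum_(k <- g | k.1.1 == p) k.2 = m1 p) /\
  (forall q, \rsum_(k <- g | k.1.2 == q) k.2 = m2 q).

Definition coupling2_cost (X : finType) (g : seq ((PX X * PX X) * R)) : R :=
  \rsum_(k <- g) (k.2 * tv k.1.1 k.1.2).

(* D_1(m1,m2) < eps, where D_1 is the Wasserstein l1 distance (an infimum over
   couplings of the expected TV distance): some coupling has cost < eps. *)
Definition W1_lt (X : finType) (m1 m2 : PX X -> R) (eps : R) : Prop :=
  exists g, is_coupling2 m1 m2 g /\ coupling2_cost g < eps.

(* Couple two copies of a coupling [g] of [mu] and [nu]: draw [(s, t)] and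
   [(s', t')] independently from [g] and send them to [(rho_{s,s'}, rho_{t,t'})],
   a coupling of the two overlap laws.  For each colour pair [(a, b)],
     rho_{s,s'}(a,b) - rho_{t,t'}(a,b)
       = 1/n sum_{i : s'_i = b} (1{s_i = a} - 1{t_i = a})
       + 1/n sum_{i : t_i = a} (1{s'_i = b} - 1{t'_i = b}),
   and for a fixed second (resp. first) pair each summand is a cut value of
   [g] with [I] determined by that pair.  Splitting according to its sign, its
   [g]-expected absolute value is at most [2 delta], so the expected total
   variation distance is at most [2 |Omega|^2 delta]. *)
From HB Require Import structures.
From Pilot Require Import Defs.
From Stdlib Require Import Reals Lra.
From mathcomp Require Import all_boot.

Set Implicit Arguments.
Unset Strict Implicit.
Unset Printing Implicit Defensive.

Local Open Scope R_scope.

(* [Reals] also exports an unrelated [ind] (from [Rtopology]). *)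
Local Notation ind := Defs.ind.

Lemma RplusA : associative Rplus. Proof. by move=> *; ring. Qed.
Lemma RmultA : associative Rmult. Proof. by move=> *; ring. Qed.

HB.instance Definition _ :=
  Monoid.isComLaw.Build R R0 Rplus RplusA Rplus_comm Rplus_0_l.
HB.instance Definition _ :=
  Monoid.isComLaw.Build R R1 Rmult RmultA Rmult_comm Rmult_1_l.
HB.instance Definition _ := Monoid.isMulLaw.Build R R0 Rmult Rmult_0_l Rmult_0_r.
HB.instance Definition _ :=
  Monoid.isAddLaw.Build R Rmult Rplus Rmult_plus_distr_r Rmult_plus_distr_l.

Lemma Rsum_pair (A B : finType) (F : A * B -> R) :
  \rsum_(x : A * B) F x = \rsum_(a : A) \rsum_(b : B) F (a, b).
Proof. by rewrite pair_bigA; apply: eq_bigr => -[]. Qed.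

Section RealSums.
Variable A : finType.

Lemma Rsum_le (F G : A -> R) :
  (forall a, F a <= G a) -> \rsum_(a : A) F a <= \rsum_(a : A) G a.
Proof. by move=> FG; apply: (big_ind2 (fun x y => x <= y)) => // *; lra. Qed.

Lemma RsumB (F G : A -> R) :
  \rsum_(a : A) (F a - G a) = \rsum_(a : A) F a - \rsum_(a : A) G a.
Proof. by rewrite /Rminus big_split /= (big_morph Ropp Ropp_plus_distr Ropp_0). Qed.

Lemma Rsum_ind (P : pred A) (F : A -> R) :
  \rsum_(a | P a) F a = \rsum_(a : A) ind (P a) * F a.
Proof. by rewrite big_mkcond; apply: eq_bigr => a _; case: (P a) => /=; ring. Qed.

Lemma INR_card (P : pred A) : INR #|[pred a | P a]| = \rsum_(a : A) ind (P a).
Proof.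
rewrite -sum1_card (big_morph INR plus_INR (erefl : INR 0 = 0)) [LHS]Rsum_ind.
by apply: eq_bigr => a _; rewrite inE /=; ring.
Qed.

Lemma Rsum_const (c : R) : \rsum_(a : A) c = INR #|A| * c.
Proof.
rewrite -sum1_card (big_morph INR plus_INR (erefl : INR 0 = 0)) big_distrl /=.
by apply: eq_bigr => a _; ring.
Qed.

Lemma Rsum_pair_swap (F : A -> A -> R) :
  \rsum_(x : A * A) F x.1 x.2 = \rsum_(x : A * A) F x.2 x.1.
Proof. by rewrite !Rsum_pair exchange_big. Qed.

(* Take [B] to be the set where [Y] is nonnegative, and its complement. *)
Lemma Rsum_abs_le_subset_sums (g Y : A -> R) (c : R) :
  (forall a, 0 <= g a) ->
  (forall B : {set A}, Rabs (\rsum_(a | a \in B) g a * Y a) < c) ->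
  \rsum_(a : A) g a * Rabs (Y a) <= 2 * c.
Proof.
move=> g_ge0 small.
pose B := [set a | Rabs (Y a) == Y a].
have onB : \rsum_(a | a \in B) g a * Rabs (Y a) = \rsum_(a | a \in B) g a * Y a.
  by apply: eq_bigr => a; rewrite inE => /eqP ->.
have offB : \rsum_(a | a \notin B) g a * Rabs (Y a) =
            - \rsum_(a | a \in ~: B) g a * Y a.
  rewrite (big_morph Ropp Ropp_plus_distr Ropp_0).
  apply: eq_big => a; first by rewrite !inE.
  rewrite inE => /eqP absY; rewrite Rabs_left; first ring.
  by apply: Rnot_le_lt => Y_ge0; apply: absY; rewrite Rabs_pos_eq.
rewrite (bigID (mem B)) /= onB offB.
have := small B; have := small (~: B).
have := Rle_abs (\rsum_(a | a \in B) g a * Y a).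
have := Rle_abs (- \rsum_(a | a \in ~: B) g a * Y a); rewrite Rabs_Ropp.
lra.
Qed.

Lemma Rsum_prod_le (g : A -> R) (F : A -> A -> R) (c : R) :
  (forall a, 0 <= g a) -> \rsum_(a : A) g a = 1 ->
  (forall a, \rsum_(b : A) g b * F a b <= c) ->
  \rsum_(x : A * A) g x.1 * g x.2 * F x.1 x.2 <= c.
Proof.
move=> g_ge0 g_mass Fc; rewrite Rsum_pair.
apply: Rle_trans (_ : \rsum_(a : A) g a * c <= c); last first.
  by rewrite -big_distrl /= g_mass; lra.
apply: Rsum_le => a /=.
rewrite (_ : \rsum_(b : A) _ = g a * \rsum_(b : A) g b * F a b).
  by apply: Rmult_le_compat_l.
by rewrite big_distrr; apply: eq_bigr => b _ /=; ring.
Qed.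

(* If [g] has image measure [m] under [p], then so does [g (x) g] under [p x p]. *)
Lemma Rsum_prod_image (C : finType) (p : A -> C) (g : A -> R) (m : C -> R) :
  (forall h : C -> R, \rsum_(a : A) h (p a) * g a = \rsum_(c : C) h c * m c) ->
  forall h : C -> C -> R,
    \rsum_(x : A * A) h (p x.1) (p x.2) * (g x.1 * g x.2) =
    \rsum_(y : C * C) h y.1 y.2 * (m y.1 * m y.2).
Proof.
move=> image h; rewrite !Rsum_pair /=.
transitivity (\rsum_(a : A) (\rsum_(c' : C) h (p a) c' * m c') * g a).
  apply: eq_bigr => a _; rewrite -image big_distrl /=.
  by apply: eq_bigr => b _; ring.
rewrite (image (fun c => \rsum_(c' : C) h c c' * m c')).
by apply: eq_bigr => c _; rewrite big_distrl /=; apply: eq_bigr => c' _; ring.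
Qed.

End RealSums.

Lemma Rinv_INR_ge0 (n : nat) : 0 <= / INR n.
Proof.
case: n => [|n]; first by rewrite Rinv_0; lra.
by apply/Rlt_le/Rinv_0_lt_compat/lt_0_INR/ltP.
Qed.

Section CutOverlap.
Variables (Omega : finType) (n : nat).
Local Notation config := (config Omega n).

Definition cut_discrepancy (I : {set 'I_n}) (w : Omega) (st : config * config) : R :=
  / INR n * \rsum_(i | i \in I) (ind (tnth st.1 i == w) - ind (tnth st.2 i == w)).

Lemma cut_valE (g : config * config -> R) I B w :
  cut_val g I B w = Rabs (\rsum_(st | st \in B) g st * cut_discrepancy I w st).
Proof.
rewrite /cut_val -(Rabs_pos_eq _ (Rinv_INR_ge0 n)) -Rabs_mult; congr Rabs.
rewrite exchange_big /= big_distrr /=; apply: eq_bigr => st _.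
rewrite /cut_discrepancy !big_distrr /=; apply: eq_bigr => i _.
by rewrite -Rmult_assoc [_ * g st]Rmult_comm [LHS]Rmult_assoc.
Qed.

Lemma Rsum_abs_cut_discrepancy_le (g : config * config -> R) (delta : R) I w :
  (forall st, 0 <= g st) -> (forall I B w, cut_val g I B w < delta) ->
  \rsum_(st : config * config) g st * Rabs (cut_discrepancy I w st) <= 2 * delta.
Proof.
move=> g_ge0 cut_lt; apply: Rsum_abs_le_subset_sums => // B.
by rewrite -cut_valE.
Qed.

Lemma overlapE (s s' : config) (w : Omega * Omega) :
  overlap s s' w = / INR n * \rsum_(i : 'I_n) ind (tnth s i == w.1) * ind (tnth s' i == w.2).
Proof.
rewrite /overlap ffunE INR_card /Rdiv Rmult_comm; congr (_ * _).
by apply: eq_bigr => i _; case: (_ == _); case: (_ == _); rewrite /ind /=; ring.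
Qed.

(* [1{s=a}1{s'=b} - 1{t=a}1{t'=b} = 1{s'=b}(1{s=a}-1{t=a}) + 1{t=a}(1{s'=b}-1{t'=b})] *)
Lemma overlap_subE (x y : config * config) (w : Omega * Omega) :
  overlap x.1 y.1 w - overlap x.2 y.2 w =
  cut_discrepancy [set i | tnth y.1 i == w.2] w.1 x +
  cut_discrepancy [set i | tnth x.2 i == w.1] w.2 y.
Proof.
rewrite !overlapE /cut_discrepancy (Rsum_ind (mem [set i | tnth y.1 i == w.2])).
rewrite (Rsum_ind (mem [set i | tnth x.2 i == w.1])) -Rmult_minus_distr_l.
rewrite -Rmult_plus_distr_l -RsumB -big_split /=; congr (_ * _).
by apply: eq_bigr => i _; rewrite !inE /ind; do 4!case: (_ == _); ring.
Qed.

Lemma Rsum_abs_overlap_sub_le (g : config * config -> R) (delta : R) w :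
  (forall st, 0 <= g st) -> \rsum_(st : config * config) g st = 1 ->
  (forall I B w, cut_val g I B w < delta) ->
  \rsum_(x : (config * config) * (config * config))
     g x.1 * g x.2 * Rabs (overlap x.1.1 x.2.1 w - overlap x.1.2 x.2.2 w) <= 4 * delta.
Proof.
move=> g_ge0 g_mass cut_lt.
pose D1 (y x : config * config) := Rabs (cut_discrepancy [set i | tnth y.1 i == w.2] w.1 x).
pose D2 (x y : config * config) := Rabs (cut_discrepancy [set i | tnth x.2 i == w.1] w.2 y).
have bound1 : \rsum_(x : (config * config) * (config * config))
                g x.1 * g x.2 * D1 x.2 x.1 <= 2 * delta.
  rewrite (Rsum_pair_swap (fun x y => g x * g y * D1 y x)) /=.
  under eq_bigr do rewrite (Rmult_comm (g _.2)).
  by apply: Rsum_prod_le => // y; apply: Rsum_abs_cut_discrepancy_le.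
have bound2 : \rsum_(x : (config * config) * (config * config))
                g x.1 * g x.2 * D2 x.1 x.2 <= 2 * delta.
  by apply: Rsum_prod_le => // x; apply: Rsum_abs_cut_discrepancy_le.
apply: Rle_trans (_ : _ <= \rsum_(x : (config * config) * (config * config))
  (g x.1 * g x.2 * D1 x.2 x.1 + g x.1 * g x.2 * D2 x.1 x.2)) _.
  apply: Rsum_le => x; rewrite overlap_subE -Rmult_plus_distr_l.
  by apply/Rmult_le_compat_l/Rabs_triang/Rmult_le_pos.
rewrite big_split /=; apply: Rle_trans (Rplus_le_compat _ _ _ _ bound1 bound2) _; lra.
Qed.

End CutOverlap.

Section OverlapCoupling.
Variables (Omega : finType) (n : nat).
Local Notation config := (config Omega n).
Local Notation PX2 := (PX (Omega * Omega)%type).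

Lemma coupling_image_fst (g : config * config -> R) (mu : config -> R) :
  (forall s, \rsum_(t : config) g (s, t) = mu s) ->
  forall h : config -> R,
    \rsum_(st : config * config) h st.1 * g st = \rsum_(s : config) h s * mu s.
Proof.
move=> g_row h; rewrite Rsum_pair; apply: eq_bigr => s _.
by rewrite -g_row big_distrr.
Qed.

Lemma coupling_image_snd (g : config * config -> R) (nu : config -> R) :
  (forall t, \rsum_(s : config) g (s, t) = nu t) ->
  forall h : config -> R,
    \rsum_(st : config * config) h st.2 * g st = \rsum_(t : config) h t * nu t.
Proof.
move=> g_col h; rewrite Rsum_pair exchange_big; apply: eq_bigr => t _.
by rewrite -g_col big_distrr.
Qed.

Lemma overlap_law_image (pr : config * config -> config) (g : config * config -> R)
    (m : config -> R) :
  (forall h : config -> R,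
     \rsum_(st : config * config) h (pr st) * g st = \rsum_(s : config) h s * m s) ->
  forall p : PX2,
    \rsum_(x | overlap (pr x.1) (pr x.2) == p) g x.1 * g x.2 = overlap_law m p.
Proof.
move=> image p; rewrite Rsum_ind.
rewrite (Rsum_prod_image image (fun s s' => ind (overlap s s' == p))).
by rewrite /overlap_law Rsum_ind.
Qed.

Definition overlap_coupling (g : config * config -> R) : seq ((PX2 * PX2) * R) :=
  [seq ((overlap x.1.1 x.2.1, overlap x.1.2 x.2.2), g x.1 * g x.2)
  | x <- index_enum ((config * config) * (config * config))%type].

Lemma overlap_coupling_is_coupling2 (mu nu : config -> R) (g : config * config -> R) :
  is_coupling mu nu g ->
  is_coupling2 (overlap_law mu) (overlap_law nu) (overlap_coupling g).
Proof.
move=> [g_ge0 [g_row g_col]]; split; [|split] => [k | p | p].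
- by move=> /List.in_map_iff [x [<- _]]; apply: Rmult_le_pos.
- by rewrite big_map; apply: overlap_law_image (coupling_image_fst g_row) p.
- by rewrite big_map; apply: overlap_law_image (coupling_image_snd g_col) p.
Qed.

Lemma overlap_coupling_cost_le (mu nu : config -> R) (g : config * config -> R)
    (delta : R) :
  is_coupling mu nu g -> \rsum_(s : config) mu s = 1 ->
  (forall I B w, cut_val g I B w < delta) ->
  coupling2_cost (overlap_coupling g) <= 2 * INR #|{: Omega * Omega}| * delta.
Proof.
move=> [g_ge0 [g_row _]] mu_mass cut_lt.
have g_mass : \rsum_(st : config * config) g st = 1.
  by rewrite Rsum_pair -mu_mass; apply: eq_bigr => s _.
rewrite /coupling2_cost big_map /=.
under eq_bigr do rewrite /tv Rmult_comm Rmult_assoc big_distrl /=.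
rewrite -big_distrr /= exchange_big /=.
apply: Rle_trans (_ : _ <= / 2 * \rsum_(w : Omega * Omega) (4 * delta)) _.
  apply/Rmult_le_compat_l; first lra.
  apply: Rsum_le => w; apply: Rle_trans (Rsum_abs_overlap_sub_le w g_ge0 g_mass cut_lt).
  by apply/Req_le/eq_bigr => x _; rewrite [LHS]Rmult_comm.
by rewrite Rsum_const (_ : #|_| = #|{: Omega * Omega}|) //; lra.
Qed.

End OverlapCoupling.

Theorem corollary2p8 (Omega : finType) (hOmega : (2 <= #|Omega|)%N)
  (eps : R) (heps : Rlt 0 eps) :
  exists (delta : R) (n0 : nat),
    Rlt 0 delta /\ (0 < n0)%N /\
    forall n : nat, (n0 < n)%N ->
    forall mu nu : n.-tuple Omega -> R,
      is_prob mu -> is_prob nu ->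
      cut_dist_lt mu nu delta ->
      W1_lt (overlap_law mu) (overlap_law nu) eps.
Proof.
pose N := INR #|{: Omega * Omega}|.
have N_gt0 : 0 < N.
  by apply/lt_0_INR/ltP; rewrite card_prod muln_gt0 andbb (leq_trans _ hOmega).
exists (eps / (4 * N)), 1%N; split; first by apply: Rdiv_lt_0_compat; lra.
split=> // n _ mu nu [_ mu_mass] _ [g [g_coupling cut_lt]].
exists (overlap_coupling g); split; first exact: overlap_coupling_is_coupling2.
apply: Rle_lt_trans (overlap_coupling_cost_le g_coupling mu_mass cut_lt) _.
have -> : 2 * N * (eps / (4 * N)) = eps / 2 by field; lra.
lra.
Qed.
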